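(* Let $(F_i)_{i\ge 1}$ and $(F'_j)_{j\ge1}$ be nice sequences of graphs. Consider the graphs $F_i+F'_j$ with the partial order in which $F_i+F'_j$ precedes $F_k+F'_\ell$ if $(i,j)\ne(k,\ell)$, $i\le k$ and $j\le \ell$. Then any total ordering of the graphs $F_i+F'_j$ extending this partial order is a nice sequence.
   Context: For graphs $A,B$, $A+B$ denotes their join: the disjoint union of $A$ and $B$ together with all edges between $V(A)$ and $V(B)$. A (finite or infinite) sequence of graphs $F_1,F_2,\dots$ is nice if for every $i$ and every two non-adjacent vertices $u,v$ of $F_i$, the graph obtained from $F_i$ by joining both $u$ and $v$ to every vertex of $N(u)\cup N(v)$ contains some $F_j$ with $j<i$ as a subgraph. *)

From mathcomp Require Import all_boot.
Set Implicit Arguments. Unset Strict Implicit. Unset Printing Implicit Defensive.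

Record graph := Graph {
  vert : finType;
  adj : rel vert;
  adj_sym : symmetric adj;
  adj_irr : irreflexive adj }.

(* Join A + B: disjoint union plus all edges between V(A) and V(B). *)
Definition join_adj (A B : graph) : rel (vert A + vert B)%type :=
  fun x y => match x, y with
  | inl a, inl a' => adj a a'
  | inr b, inr b' => adj b b'
  | _, _ => true
  end.

Lemma join_adj_sym A B : symmetric (@join_adj A B).
Proof. by case=> [a|b] [a'|b'] //=; rewrite adj_sym. Qed.

Lemma join_adj_irr A B : irreflexive (@join_adj A B).
Proof. by case=> [a|b] /=; rewrite adj_irr. Qed.

Definition join (A B : graph) : graph :=
  @Graph (vert A + vert B)%type (@join_adj A B) (@join_adj_sym A B) (@join_adj_irr A B).

Definition merge_adj (G : graph) (u v : vert G) : rel (vert G) :=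
  fun x y =>
    [|| adj x y,
        ((x == u) || (x == v)) && (adj u y || adj v y)
      | ((y == u) || (y == v)) && (adj u x || adj v x)].

Definition contains_subgraph (T : finType) (e : rel T) (H : graph) : Prop :=
  exists f : vert H -> T, injective f /\ forall x y, adj x y -> e (f x) (f y).

(* Nice (infinite) sequence, indexed from 0 instead of 1. *)
Definition nice (F : nat -> graph) : Prop :=
  forall (i : nat) (u v : vert (F i)), u != v -> ~~ adj u v ->
    exists2 j, j < i & contains_subgraph (merge_adj u v) (F j).

Definition pair_prec (p q : nat * nat) : bool :=
  (p != q) && (p.1 <= q.1) && (p.2 <= q.2).

From mathcomp Require Import all_boot.
Set Implicit Arguments. Unset Strict Implicit. Unset Printing Implicit Defensive.

(* Two non-adjacent vertices u, v of a join A + B lie on the same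
   side, since vertices on different sides are adjacent.  If
   u, v lie in A, the merged join is (A with u, v merged) + B, which contains
   A' + B as soon as the merged A contains A'; symmetrically for B.  Hence for
   nice F and F', every merge in F_i + F'_j contains some F_k + F'_l with
   (k,l) strictly below (i,j) in the product order, i.e. the family of joins is
   "nice with respect to" that partial order.  Finally, niceness with respect
   to any order transfers to every enumeration that lists predecessors first,
   which gives the theorem. *)

Lemma contains_subgraph_subrel (T : finType) (e e' : rel T) (H : graph) :
  subrel e e' -> contains_subgraph e H -> contains_subgraph e' H.
Proof. by move=> ee' [f [f_inj f_adj]]; exists f; split=> // x y /f_adj/ee'. Qed.

Lemma contains_subgraph_refl (G : graph) : contains_subgraph (@adj G) G.
Proof. by exists id; split. Qed.

Definition join_rel (T U : finType) (eT : rel T) (eU : rel U) : rel (T + U) :=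
  fun x y => match x, y with
  | inl a, inl a' => eT a a'
  | inr b, inr b' => eU b b'
  | _, _ => true
  end.

Lemma contains_subgraph_join (T U : finType) (eT : rel T) (eU : rel U)
    (A B : graph) :
  contains_subgraph eT A -> contains_subgraph eU B ->
  contains_subgraph (join_rel eT eU) (join A B).
Proof.
move=> [f [f_inj f_adj]] [g [g_inj g_adj]].
exists (fun x : vert (join A B) =>
          match x with inl a => inl (f a) | inr b => inr (g b) end).
split.
- by case=> [a|b] [a'|b'] // [] /= => [/f_inj|/g_inj] ->.
- by case=> [a|b] [a'|b'] //= => [/f_adj|/g_adj].
Qed.

(* Merging two vertices of the left side of a join only merges them in that
   side, so a subgraph of the merged left side yields a subgraph of the merged
   join. *)
Lemma contains_merge_join_inl (A A' B : graph) (a a' : vert A) :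
  contains_subgraph (merge_adj a a') A' ->
  contains_subgraph (@merge_adj (join A B) (inl a) (inl a')) (join A' B).
Proof.
move=> contains_A'.
have := contains_subgraph_join contains_A' (contains_subgraph_refl B).
by apply: contains_subgraph_subrel => -[x|x] [y|y]; rewrite /merge_adj /= ?orbF.
Qed.

Lemma contains_merge_join_inr (A B B' : graph) (b b' : vert B) :
  contains_subgraph (merge_adj b b') B' ->
  contains_subgraph (@merge_adj (join A B) (inr b) (inr b')) (join A B').
Proof.
move=> contains_B'.
have := contains_subgraph_join (contains_subgraph_refl A) contains_B'.
by apply: contains_subgraph_subrel => -[x|x] [y|y]; rewrite /merge_adj /= ?orbF.
Qed.

Definition nice_wrt (I : Type) (prec : I -> I -> bool) (G : I -> graph) :=
  forall (p : I) (u v : vert (G p)), u != v -> ~~ adj u v ->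
    exists2 q, prec q p & contains_subgraph (merge_adj u v) (G q).

Lemma pair_prec_fst (k i j : nat) : k < i -> pair_prec (k, j) (i, j).
Proof.
by move=> ki; rewrite /pair_prec /= leqnn (ltnW ki) xpair_eqE (ltn_eqF ki).
Qed.

Lemma pair_prec_snd (i l j : nat) : l < j -> pair_prec (i, l) (i, j).
Proof.
by move=> lj; rewrite /pair_prec /= leqnn (ltnW lj) xpair_eqE (ltn_eqF lj) andbF.
Qed.

Lemma nice_wrt_joins (F F' : nat -> graph) :
  nice F -> nice F' -> nice_wrt pair_prec (fun p => join (F p.1) (F' p.2)).
Proof.
move=> niceF niceF' [i j] /=.
case=> [a|b] [a'|b'] //= uv nadj.
- have [k ki contains_k] := niceF i a a' uv nadj.
  exists (k, j); first exact: pair_prec_fst.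
  exact: contains_merge_join_inl.
- have [l lj contains_l] := niceF' j b b' uv nadj.
  exists (i, l); first exact: pair_prec_snd.
  exact: contains_merge_join_inr.
Qed.

Lemma nice_enumeration (I : Type) (prec : I -> I -> bool) (G : I -> graph)
    (e : nat -> I) (g : I -> nat) :
  nice_wrt prec G -> cancel g e ->
  (forall n m, prec (e n) (e m) -> n < m) ->
  nice (fun n => G (e n)).
Proof.
move=> niceG ge e_mono n u v uv nadj.
have [q q_prec contains_q] := niceG (e n) u v uv nadj.
by exists (g q); [apply: e_mono; rewrite ge | rewrite ge].
Qed.

Theorem mainTheorem8 (F F' : nat -> graph) (e : nat -> nat * nat) :
  nice F -> nice F' ->
  bijective e ->
  (forall n m, pair_prec (e n) (e m) -> n < m) ->
  nice (fun n => join (F (e n).1) (F' (e n).2)).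
Proof.
move=> niceF niceF' [g _ ge] e_mono.
exact: nice_enumeration (nice_wrt_joins niceF niceF') ge e_mono.
Qed.
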